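(* Let $S$ be an entropy function for a finite set $X$. Given functions $\mu,\nu:2^X\to[0,\infty)$, there exist functions $\mu',\nu':2^X\to[0,\infty)$ with non-overlapping supports (i.e. $\mu'(A)>0$ and $\nu'(B)>0$ imply $A\cap B=\emptyset$) such that $\phi_{\mu'}-\phi_{\nu'}=\phi_\mu-\phi_\nu$ and \[\sum_{A\subseteq X}(\mu'(A)+\nu'(A))S(A)\le\sum_{A\subseteq X}(\mu(A)+\nu(A))S(A).\]
   Context: An entropy function for a finite set $X$ is a function $S:2^X\to[0,\infty)$ with $S(\emptyset)=0$, $S(A)+S(B)\ge S(A\cap B)+S(A\cup B)$ and $S(A)+S(B)\ge S(A\setminus B)+S(B\setminus A)$ for all $A,B\subseteq X$. For $\mu:2^X\to\mathbb R$, $\phi_\mu:X\to\mathbb R$ is defined by $\phi_\mu(x):=\sum_{A\ni x}\mu(A)$. *)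

From HB Require Import structures.
From mathcomp Require Import all_boot all_order all_algebra.
From mathcomp Require Import reals.
Set Implicit Arguments. Unset Strict Implicit. Unset Printing Implicit Defensive.
Import Order.TTheory GRing.Theory Num.Theory.
Local Open Scope ring_scope.

Definition entropy_function (R : realType) (X : finType) (S : {set X} -> R) : Prop :=
  [/\ S set0 = 0,
      (forall A, 0 <= S A),
      (forall A B, S (A :&: B) + S (A :|: B) <= S A + S B) &
      (forall A B, S (A :\: B) + S (B :\: A) <= S A + S B)].

Definition phi (R : realType) (X : finType) (mu : {set X} -> R) (x : X) : R :=
  \sum_(A : {set X} | x \in A) mu A.

From HB Require Import structures.
From mathcomp Require Import all_boot all_order all_algebra.
From mathcomp Require Import reals.
From mathcomp Require Import lra zify.
Import Order.TTheory GRing.Theory Num.Theory.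
Set Implicit Arguments. Unset Strict Implicit. Unset Printing Implicit Defensive.
Local Open Scope ring_scope.

(* If a point x lies in sets A and B with mu A > 0 and nu B > 0,
   move mass t = min (mu A) (nu B) from A to A :\: B in mu and from B to B :\: A
   in nu.  This preserves phi_mu - phi_nu, and the second entropy inequality
   S (A :\: B) + S (B :\: A) <= S A + S B shows that the cost does not increase.
   Every overlap of the new supports lies in an old overlap, while A or B leaves
   the support, so the number of support sets containing x drops.  Hence
   finitely many steps remove x from all overlaps, and clearing the points of X
   one at a time makes the supports disjoint. *)

Section Uncrossing.
Variables (R : realType) (X : finType) (S : {set X} -> R).
Implicit Types (m mu nu : {set X} -> R) (A B C D Y : {set X}) (t : R) (x y : X).

Definition point D t C := if C == D then t else 0.

Definition shift m A D t C := m C + point D t C - point A t C.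

Lemma shift_ge0 m A D t :
  (forall C, 0 <= m C) -> 0 <= t -> t <= m A -> forall C, 0 <= shift m A D t C.
Proof.
move=> m_ge0 t_ge0 t_le C; have := m_ge0 C; rewrite /shift /point.
by case: (C == D); case: eqP => [->|_]; lra.
Qed.

Lemma shift_gt0 m A D t C : 0 <= t -> 0 < shift m A D t C -> 0 < m C \/ C = D.
Proof.
rewrite /shift /point => t_ge0; case: eqP => [->|_]; first by right.
by case: ifP => _ ?; left; lra.
Qed.

Lemma phi_point D t y : phi (point D t) y = if y \in D then t else 0.
Proof.
rewrite /phi big_mkcond (bigD1 D) //= /point (eqxx D) big1 ?addr0 // => C /negbTE CD.
by rewrite CD; case: ifP.
Qed.

Lemma phi_shift m A D t y :
  phi (shift m A D t) y = phi m y + (if y \in D then t else 0) - (if y \in A then t else 0).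
Proof. by rewrite /phi /shift sumrB big_split /= -!/(phi _ y) !phi_point. Qed.

Definition weight m := \sum_C m C * S C.

Lemma weight_point D t : weight (point D t) = t * S D.
Proof.
rewrite /weight (bigD1 D) //= /point (eqxx D) big1 ?addr0 // => C /negbTE ->.
exact: mul0r.
Qed.

Lemma weight_shift m A D t : weight (shift m A D t) = weight m + t * (S D - S A).
Proof.
rewrite /weight /shift; under eq_bigr do rewrite mulrBl mulrDl.
by rewrite sumrB big_split /= -!/(weight _) !weight_point mulrBr addrA.
Qed.

Lemma weightD m m' : weight (m \+ m') = weight m + weight m'.
Proof. by rewrite /weight -big_split; apply: eq_bigr => C _; rewrite mulrDl. Qed.

Hypothesis S_entropy : entropy_function S.

Lemma weight_uncross mu nu A B t : 0 <= t ->
  weight (shift mu A (A :\: B) t \+ shift nu B (B :\: A) t) <= weight (mu \+ nu).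
Proof.
move=> t_ge0; rewrite (weightD (shift mu A _ t)) weightD !weight_shift.
case: S_entropy => _ _ _ /(_ A B) /(ler_wpM2l t_ge0) diff_le.
rewrite !mulrDr in diff_le; rewrite !mulrBr; lra.
Qed.

Definition improves mu nu mu' nu' :=
  [/\ (forall C, 0 <= mu' C), (forall C, 0 <= nu' C),
      (forall x, phi mu' x - phi nu' x = phi mu x - phi nu x) &
      weight (mu' \+ nu') <= weight (mu \+ nu)].

Lemma improves_refl mu nu :
  (forall C, 0 <= mu C) -> (forall C, 0 <= nu C) -> improves mu nu mu nu.
Proof. by split. Qed.

Lemma improves_trans mu1 nu1 mu2 nu2 mu3 nu3 :
  improves mu1 nu1 mu2 nu2 -> improves mu2 nu2 mu3 nu3 -> improves mu1 nu1 mu3 nu3.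
Proof.
move=> [_ _ phi12 le12] [mu3_ge0 nu3_ge0 phi23 le23]; split=> //.
  by move=> x; rewrite phi23 phi12.
exact: le_trans le23 le12.
Qed.

Lemma uncross_improves mu nu A B t :
    (forall C, 0 <= mu C) -> (forall C, 0 <= nu C) ->
    0 <= t -> t <= mu A -> t <= nu B ->
  improves mu nu (shift mu A (A :\: B) t) (shift nu B (B :\: A) t).
Proof.
move=> mu_ge0 nu_ge0 t_ge0 t_le_muA t_le_nuB; split.
- exact: shift_ge0.
- exact: shift_ge0.
- move=> x; rewrite !phi_shift !inE.
  by case: (x \in A); case: (x \in B) => /=; lra.
- exact: weight_uncross.
Qed.

Definition overlap_in Y mu nu :=
  forall C D, 0 < mu C -> 0 < nu D -> C :&: D \subset Y.

Lemma uncross_overlap_in Y mu nu A B t :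
    0 <= t -> 0 < mu A -> 0 < nu B -> overlap_in Y mu nu ->
  overlap_in Y (shift mu A (A :\: B) t) (shift nu B (B :\: A) t).
Proof.
move=> t_ge0 muA nuB ovY C D /(shift_gt0 t_ge0) [muC|->] /(shift_gt0 t_ge0) [nuD|->].
- exact: ovY.
- apply: subset_trans (ovY _ _ muC nuB); apply/subsetP => z.
  by rewrite !inE => /and3P[-> _ ->].
- apply: subset_trans (ovY _ _ muA nuD); apply/subsetP => z.
  by rewrite !inE => /andP[/andP[_ ->] ->].
- by apply/subsetP => z; rewrite !inE; case: (z \in A); case: (z \in B).
Qed.

Definition supp_at x m := [set C : {set X} | (x \in C) && (0 < m C)].

Lemma supp_at_shift x m A D t :
  0 <= t -> x \notin D -> supp_at x (shift m A D t) \subset supp_at x m.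
Proof.
move=> t_ge0 xD; apply/subsetP => C; rewrite !inE => /andP[xC /(shift_gt0 t_ge0)].
by case=> [->|CD]; [rewrite xC | move: xD; rewrite -CD xC].
Qed.

Lemma supp_at_shift_proper x m A D :
  x \notin D -> x \in A -> 0 < m A -> supp_at x (shift m A D (m A)) \proper supp_at x m.
Proof.
move=> xD xA mA; rewrite properE supp_at_shift ?ltW //=.
apply/subsetPn; exists A; first by rewrite inE xA mA.
have AD : (A == D) = false by apply: contraNF xD => /eqP <-.
by rewrite inE xA /shift /point AD eqxx addr0 subrr ltxx.
Qed.

Lemma uncross_at x mu nu A B :
    (forall C, 0 <= mu C) -> (forall C, 0 <= nu C) ->
    x \in A -> x \in B -> 0 < mu A -> 0 < nu B ->
  exists mu1 nu1, [/\ improves mu nu mu1 nu1,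
    (forall Y, overlap_in Y mu nu -> overlap_in Y mu1 nu1) &
    (#|supp_at x mu1| + #|supp_at x nu1| < #|supp_at x mu| + #|supp_at x nu|)%N].
Proof.
move=> mu_ge0 nu_ge0 xA xB muA nuB.
have xAB : x \notin A :\: B by rewrite !inE xB.
have xBA : x \notin B :\: A by rewrite !inE xA.
suff [t [t_gt0 t_le_muA t_le_nuB t_eq]] :
    exists t, [/\ 0 < t, t <= mu A, t <= nu B & t = mu A \/ t = nu B].
  exists (shift mu A (A :\: B) t), (shift nu B (B :\: A) t); split.
  - exact: uncross_improves (ltW t_gt0) t_le_muA t_le_nuB.
  - by move=> Y; apply: uncross_overlap_in (ltW t_gt0) muA nuB.
  have := subset_leq_card (supp_at_shift mu A (ltW t_gt0) xAB).
  have := subset_leq_card (supp_at_shift nu B (ltW t_gt0) xBA).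
  case: t_eq => ->.
  + by have := proper_card (supp_at_shift_proper xAB xA muA); lia.
  + by have := proper_card (supp_at_shift_proper xBA xB nuB); lia.
exists (Num.min (mu A) (nu B)); rewrite lt_min muA nuB ge_min lexx ge_min lexx orbT.
by split=> //; case: leP => _; [left | right].
Qed.

Lemma clear_point x Y mu nu :
    (forall C, 0 <= mu C) -> (forall C, 0 <= nu C) -> overlap_in Y mu nu ->
  exists mu' nu', improves mu nu mu' nu' /\ overlap_in (Y :\ x) mu' nu'.
Proof.
have [n] := ubnP (#|supp_at x mu| + #|supp_at x nu|).
elim: n mu nu => // n IH mu nu supp_lt mu_ge0 nu_ge0 ovY.
have [/existsP[A /existsP[B /and4P[xA xB muA nuB]]]|no_cross] :=
  boolP [exists A : {set X}, exists B : {set X}, [&& x \in A, x \in B, 0 < mu A & 0 < nu B]].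
  have [mu1 [nu1 [imp1 ov1 supp1]]] := uncross_at mu_ge0 nu_ge0 xA xB muA nuB.
  have [mu1_ge0 nu1_ge0 _ _] := imp1.
  have [mu2 [nu2 [imp2 ov2]]] :=
    IH mu1 nu1 (leq_trans supp1 supp_lt) mu1_ge0 nu1_ge0 (ov1 _ ovY).
  by exists mu2, nu2; split=> //; apply: improves_trans imp1 imp2.
exists mu, nu; split; first exact: improves_refl.
move=> C D muC nuD; apply/subsetP => z zCD.
rewrite !inE (subsetP (ovY _ _ muC nuD)) // andbT.
apply: contraNneq no_cross => zx; apply/existsP; exists C; apply/existsP; exists D.
by move: zCD; rewrite zx inE muC nuD => /andP[-> ->].
Qed.

Lemma clear_overlap Y mu nu :
    (forall C, 0 <= mu C) -> (forall C, 0 <= nu C) -> overlap_in Y mu nu ->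
  exists mu' nu', improves mu nu mu' nu' /\ overlap_in set0 mu' nu'.
Proof.
have [n] := ubnP #|Y|; elim: n Y mu nu => // n IH Y mu nu Y_lt mu_ge0 nu_ge0 ovY.
have [Y0|[x xY]] := set_0Vmem Y.
  by exists mu, nu; split; [exact: improves_refl | rewrite -Y0].
have [mu1 [nu1 [imp1 ov1]]] := clear_point x mu_ge0 nu_ge0 ovY.
have [mu1_ge0 nu1_ge0 _ _] := imp1.
have Yx_lt : (#|Y :\ x| < n)%N by move: Y_lt; rewrite (cardsD1 x Y) xY.
have [mu2 [nu2 [imp2 ov2]]] := IH _ mu1 nu1 Yx_lt mu1_ge0 nu1_ge0 ov1.
by exists mu2, nu2; split=> //; apply: improves_trans imp1 imp2.
Qed.

End Uncrossing.

Theorem lemma30 (R : realType) (X : finType) (S : {set X} -> R)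
  (hS : entropy_function S) (mu nu : {set X} -> R)
  (hmu : forall A, 0 <= mu A) (hnu : forall A, 0 <= nu A) :
  exists mu' nu' : {set X} -> R,
    [/\ (forall A, 0 <= mu' A), (forall A, 0 <= nu' A),
        (forall A B, 0 < mu' A -> 0 < nu' B -> A :&: B = set0),
        (forall x, phi mu' x - phi nu' x = phi mu x - phi nu x) &
        \sum_(A : {set X}) (mu' A + nu' A) * S A
          <= \sum_(A : {set X}) (mu A + nu A) * S A].
Proof.
have ovT : overlap_in [set: X] mu nu by move=> C D _ _; exact: subsetT.
have [mu' [nu' [[mu'_ge0 nu'_ge0 phiE weight_le] ov0]]] := clear_overlap hS hmu hnu ovT.
exists mu', nu'; split=> // A B muA nuB.
by apply/eqP; rewrite -subset0; exact: ov0.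
Qed.
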